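(* Let $X$ be a real Banach space. If $X$ is fully Mazur (respectively, fully Mackey complete), then every closed linear subspace of $X$ is fully Mazur (respectively, fully Mackey complete).
   Context: A linear subspace $Y\subset X^*$ is norming if $|||x|||=\sup\{x^*(x): x^*\in Y,\ \|x^*\|\le 1\}$ defines an equivalent norm on $X$. $X$ is fully Mazur if for every norming and norm-closed subspace $Y\subset X^*$, every $w^*$-sequentially continuous linear functional $Y\to\mathbb{R}$ is $w^*$-continuous. $X$ is fully Mackey complete if $(X,\mu(X,Y))$ is complete for every norming and norm-closed subspace $Y\subset X^*$, where $\mu(X,Y)$ is the locally convex topology on $X$ of uniform convergence on absolutely convex $w^*$-compact subsets of $Y$. *)

From HB Require Import structures.
From mathcomp Require Import all_boot all_order all_algebra.
From mathcomp Require Import all_classical all_reals all_analysis.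
Set Implicit Arguments. Unset Strict Implicit. Unset Printing Implicit Defensive.
Import Order.TTheory GRing.Theory Num.Theory.
Import numFieldNormedType.Exports.
Local Open Scope classical_set_scope.
Local Open Scope ring_scope.

Record lsubspace (R : realType) (X : normedModType R) := LSubspace {
  lss : set X;
  lss0 : lss 0;
  lssD : forall x y, lss x -> lss y -> lss (x + y);
  lssZ : forall (a : R) x, lss x -> lss (a *: x) }.

Section SubspaceType.
Variables (R : realType) (X : normedModType R) (V : lsubspace X).

Record subsp := SubElt { sval : X; sprop : `[< lss V sval >] }.

HB.instance Definition _ := [isSub for sval].
HB.instance Definition _ := [Choice of subsp by <:].

Lemma subsp_in (x : subsp) : lss V (sval x).
Proof. by case: x => y /= /asboolP. Qed.

Definition sub_zero : subsp := SubElt (asboolT (lss0 V)).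
Definition sub_add (x y : subsp) : subsp :=
  SubElt (asboolT (lssD (subsp_in x) (subsp_in y))).
Definition sub_scale (a : R) (x : subsp) : subsp :=
  SubElt (asboolT (lssZ a (subsp_in x))).
Definition sub_opp (x : subsp) : subsp := sub_scale (-1) x.

Lemma sub_addA : associative sub_add.
Proof. by move=> x y z; apply: val_inj; rewrite /= addrA. Qed.
Lemma sub_addC : commutative sub_add.
Proof. by move=> x y; apply: val_inj; rewrite /= addrC. Qed.
Lemma sub_add0 : left_id sub_zero sub_add.
Proof. by move=> x; apply: val_inj; rewrite /= add0r. Qed.
Lemma sub_addN : left_inverse sub_zero sub_opp sub_add.
Proof. by move=> x; apply: val_inj; rewrite /= scaleN1r addNr. Qed.

HB.instance Definition _ :=
  GRing.isZmodule.Build subsp sub_addA sub_addC sub_add0 sub_addN.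

Lemma sub_scalerA a b (v : subsp) : sub_scale a (sub_scale b v) = sub_scale (a * b) v.
Proof. by apply: val_inj; rewrite /= scalerA. Qed.
Lemma sub_scale1r : left_id 1 sub_scale.
Proof. by move=> x; apply: val_inj; rewrite /= scale1r. Qed.
Lemma sub_scalerDr : right_distributive sub_scale +%R.
Proof. by move=> a x y; apply: val_inj; rewrite /= scalerDr. Qed.
Lemma sub_scalerDl (v : subsp) : {morph sub_scale^~ v : a b / a + b}.
Proof. by move=> a b; apply: val_inj; rewrite /= scalerDl. Qed.

HB.instance Definition _ := GRing.Zmodule_isLmodule.Build R subsp
  sub_scalerA sub_scale1r sub_scalerDr sub_scalerDl.

Definition sub_norm (x : subsp) : R := `|sval x|.
Lemma sub_ler_normD (x y : subsp) : sub_norm (x + y) <= sub_norm x + sub_norm y.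
Proof. exact: ler_normD. Qed.
Lemma sub_normrZ (l : R) (x : subsp) : sub_norm (l *: x) = `|l| * sub_norm x.
Proof. exact: normrZ. Qed.
Lemma sub_normr0_eq0 (x : subsp) : sub_norm x = 0 -> x = 0.
Proof. by move=> /normr0_eq0 h; apply: val_inj. Qed.

HB.instance Definition _ := Lmodule_isNormed.Build R subsp
  sub_ler_normD sub_normrZ sub_normr0_eq0.

End SubspaceType.


Section DualNotions.
Variables (R : realType) (X : normedModType R).

Definition lin_functional (f : X -> R) : Prop :=
  forall (a : R) (x y : X), f (a *: x + y) = a * f x + f y.

Definition dual : set (X -> R) :=
  [set f | lin_functional f /\ continuous f].

Definition dnorm (f : X -> R) : R :=
  sup [set `|f x| | x in [set x : X | `|x| <= 1]].

Definition dual_subspace (Y : set (X -> R)) : Prop :=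
  [/\ Y `<=` dual, Y (fun _ => 0) &
      forall (a : R) f g, Y f -> Y g -> Y (fun x => a * f x + g x)].

Definition norm_closed (Y : set (X -> R)) : Prop :=
  forall f, dual f ->
    (forall e : R, 0 < e -> exists2 g, Y g & dnorm (fun x => f x - g x) < e) ->
    Y f.

Definition tnorm (Y : set (X -> R)) (x : X) : R :=
  sup [set f x | f in [set f | Y f /\ dnorm f <= 1]].

Definition norming (Y : set (X -> R)) : Prop :=
  [/\ (forall x y, tnorm Y (x + y) <= tnorm Y x + tnorm Y y),
      (forall (a : R) x, tnorm Y (a *: x) = `|a| * tnorm Y x) &
      exists c C : R, [/\ 0 < c, 0 < C &
        forall x, c * `|x| <= tnorm Y x /\ tnorm Y x <= C * `|x|]].

(* the weak* topology on X* is the restriction of the topology of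
   pointwise convergence on X *)
Definition wstar := {ptws X -> R}.

Definition lin_on (Y : set (X -> R)) (phi : (X -> R) -> R) : Prop :=
  forall (a : R) f g, Y f -> Y g ->
    phi (fun x => a * f x + g x) = a * phi f + phi g.

Definition wstar_seq_continuous (Y : set (X -> R)) (phi : (X -> R) -> R) : Prop :=
  forall (u : nat -> wstar) (g : wstar),
    (forall n, Y (u n)) -> Y g -> u @ \oo --> g ->
    (phi \o u) @ \oo --> phi g.

Definition wstar_continuous (Y : set (X -> R)) (phi : (X -> R) -> R) : Prop :=
  {within (Y : set wstar), continuous (phi : wstar -> R)}.

Definition fully_mazur : Prop :=
  forall Y : set (X -> R),
    dual_subspace Y -> norming Y -> norm_closed Y ->
    forall phi : (X -> R) -> R,
      lin_on Y phi -> wstar_seq_continuous Y phi -> wstar_continuous Y phi.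

(* Mackey topology mu(X, Y): uniform convergence on the absolutely convex
   weak*-compact subsets of Y *)
Definition abs_convex (K : set (X -> R)) : Prop :=
  forall f g (a b : R), K f -> K g -> `|a| + `|b| <= 1 ->
    K (fun x => a * f x + b * g x).

Definition mackey_set (Y : set (X -> R)) (K : set (X -> R)) : Prop :=
  [/\ K `<=` Y, abs_convex K & compact (K : set wstar)].

Definition pK (K : set (X -> R)) (x : X) : R := sup [set `|f x| | f in K].

Definition mackey_cauchy (Y : set (X -> R)) (F : set_system X) : Prop :=
  forall K, mackey_set Y K -> forall e : R, 0 < e ->
    exists A, F A /\ (forall x y, A x -> A y -> pK K (x - y) < e).

Definition mackey_cvg (Y : set (X -> R)) (F : set_system X) (x0 : X) : Prop :=
  forall K, mackey_set Y K -> forall e : R, 0 < e ->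
    F [set y | pK K (y - x0) < e].

Definition mackey_complete (Y : set (X -> R)) : Prop :=
  forall F : set_system X, ProperFilter F -> mackey_cauchy Y F ->
    exists x0, mackey_cvg Y F x0.

Definition fully_mackey_complete : Prop :=
  forall Y : set (X -> R),
    dual_subspace Y -> norming Y -> norm_closed Y -> mackey_complete Y.

End DualNotions.

(* Let V be a closed subspace of X and Y a norming, norm-closed subspace of V*.
   Its preimage Z = {z in X* | z|V in Y} under restriction is a norming,
   norm-closed subspace of X*: by Hahn-Banach every element of Y extends to X
   with the same norm, and the functionals vanishing on V see the points far
   from V.
   Mazur: if phi is w*-sequentially continuous on Y, so is phi o restr on Z.
   X being fully Mazur, phi o restr is w*-continuous, hence evaluation at some
   x0 (it vanishes on the annihilator of a finite set).  Functionals vanishing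
   on V force x0 in V, and then phi is evaluation at x0 on Y.
   Mackey: restriction maps Mackey sets of Z to Mackey sets of Y, so a
   mu(V, Y)-Cauchy filter is mu(X, Z)-Cauchy in X and has a limit x0, which lies
   in V (test against the segments [-1, 1] z with z vanishing on V).  A Mackey
   set K of Y is norm bounded by Banach-Steinhaus in the Banach space V, so the
   equally bounded linear extensions of the elements of K form, by Tychonoff, a
   Mackey set of Z dominating K; hence the filter converges to x0 in mu(V, Y). *)

From Pilot Require Import Defs.
From HB Require Import structures.
From mathcomp Require Import all_boot all_order all_algebra.
From mathcomp Require Import all_classical all_reals all_analysis.
From mathcomp Require Import lra ring.
Import Order.TTheory GRing.Theory Num.Theory.
Import numFieldNormedType.Exports.
Local Open Scope classical_set_scope.
Local Open Scope ring_scope.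
Set Implicit Arguments. Unset Strict Implicit. Unset Printing Implicit Defensive.

Section HahnBanach.
Variables (R : realType) (X : lmodType R) (p : X -> R).
Hypothesis pD : forall x y, p (x + y) <= p x + p y.
Hypothesis pZ : forall (t : R) x, 0 <= t -> p (t *: x) = t * p x.

(* Partial linear functionals are handled through their graphs, so that
   Zorn's lemma runs on sets of pairs and no type of subspaces is needed. *)
Definition dominated_graph (G : set (X * R)) : Prop :=
  [/\ G (0, 0),
      (forall (a : R) u v, G u -> G v -> G (a *: u.1 + v.1, a * u.2 + v.2)),
      (forall x b c, G (x, b) -> G (x, c) -> b = c) &
      (forall x b, G (x, b) -> b <= p x)].

Lemma dominated_graphZ G k x b : dominated_graph G -> G (x, b) -> G (k *: x, k * b).
Proof.
case=> G0 GC _ _ Gxb; have := GC k (x, b) (0, 0) Gxb G0.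
by rewrite /= !addr0.
Qed.

Lemma dominated_graphD G x b y c :
  dominated_graph G -> G (x, b) -> G (y, c) -> G (x + y, b + c).
Proof.
case=> _ GC _ _ Gxb Gyc; have := GC 1 (x, b) (y, c) Gxb Gyc.
by rewrite /= scale1r mul1r.
Qed.

Lemma dominated_graphB G x b y c :
  dominated_graph G -> G (x, b) -> G (y, c) -> G (y - x, c - b).
Proof.
case=> _ GC _ _ Gxb Gyc; have := GC (-1) (x, b) (y, c) Gxb Gyc.
by rewrite /= scaleN1r mulN1r (addrC (- x)) (addrC (- b)).
Qed.

Lemma dominated_graph_extension_value H x0 : dominated_graph H ->
  exists c, forall y b, H (y, b) -> b - p (y - x0) <= c /\ c <= p (y + x0) - b.
Proof.
move=> gH; have [H0 _ _ Hp] := gH.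
have sep y b y' b' : H (y, b) -> H (y', b') -> b - p (y - x0) <= p (y' + x0) - b'.
  move=> Hyb Hyb'; have := Hp _ _ (dominated_graphD gH Hyb Hyb').
  have := pD (y - x0) (y' + x0).
  rewrite addrACA addNr addr0; lra.
pose S := [set d | exists y b, H (y, b) /\ d = b - p (y - x0)].
have S0 : S !=set0 by exists (0 - p (0 - x0)), 0, 0.
have Sub : ubound S (p (0 + x0) - 0) by move=> d [y [b [Hyb ->]]]; exact: sep.
exists (sup S) => y b Hyb; split.
  by apply: ub_le_sup; [exists (p (0 + x0) - 0) | exists y, b].
by apply: ge_sup => // d [y1 [b1 [Hyb1 ->]]]; exact: sep.
Qed.

Lemma dominated_graph_extension_le H x0 c y b t : dominated_graph H ->
  (forall y b, H (y, b) -> b - p (y - x0) <= c /\ c <= p (y + x0) - b) ->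
  H (y, b) -> b + t * c <= p (y + t *: x0).
Proof.
move=> gH cH Hyb; have [_ _ _ Hp] := gH.
have [->|tn0] := eqVneq t 0; first by rewrite scale0r mul0r !addr0; exact: Hp.
have [tpos|tneg] := ltP 0 t.
  have [_ h] := cH _ _ (dominated_graphZ t^-1 gH Hyb).
  have -> : p (y + t *: x0) = t * p (t^-1 *: y + x0).
    by rewrite -pZ ?ltW // scalerDr scalerA mulfV // scale1r.
  move: (ler_wpM2l (ltW tpos) h); rewrite mulrBr mulrA mulfV // mul1r; lra.
have sp : 0 < - t by rewrite oppr_gt0 lt_neqAle tn0.
have [h _] := cH _ _ (dominated_graphZ (- t)^-1 gH Hyb).
have -> : p (y + t *: x0) = - t * p ((- t)^-1 *: y - x0).
  rewrite -pZ ?ltW // scalerBr scalerA mulfV ?oppr_eq0 // scale1r.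
  by rewrite scaleNr opprK.
move: (ler_wpM2l (ltW sp) h); rewrite mulrBr mulrA mulfV ?oppr_eq0 // mul1r; lra.
Qed.

Lemma dominated_graph_extend H x0 : dominated_graph H -> (forall b, ~ H (x0, b)) ->
  exists H', [/\ dominated_graph H', H `<=` H' & exists c, H' (x0, c)].
Proof.
move=> gH nx0; have [H0 HC Hf _] := gH.
have [c cH] := dominated_graph_extension_value x0 gH.
exists [set u | exists y b t, H (y, b) /\ u = (y + t *: x0, b + t * c)]; split.
- split.
  + by exists 0, 0, 0; rewrite scale0r addr0 mul0r addr0.
  + move=> a u v [y1 [b1 [t1 [H1 ->]]]] [y2 [b2 [t2 [H2 ->]]]] /=.
    exists (a *: y1 + y2), (a * b1 + b2), (a * t1 + t2); split.
      exact: (HC a (y1, b1) (y2, b2)).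
    congr pair; first by rewrite scalerDr scalerA scalerDl addrACA.
    by rewrite mulrDr mulrA mulrDl addrACA.
  + move=> x b b' [y1 [b1 [t1 [H1 [-> ->]]]]] [y2 [b2 [t2 [H2 [e ->]]]]].
    have [t12|t12] := eqVneq t1 t2.
      by subst t2; move/addIr: e => e; subst y2; rewrite (Hf _ _ _ H1 H2).
    (* Otherwise x0 = (y2 - y1) / (t1 - t2) would be in the domain of H. *)
    exfalso; apply: (nx0 ((t1 - t2)^-1 * (b2 - b1))).
    have -> : x0 = (t1 - t2)^-1 *: (y2 - y1).
      apply: (@scalerI _ _ (t1 - t2)); first by rewrite subr_eq0.
      rewrite scalerA mulfV ?subr_eq0 // scale1r scalerBl.
      by rewrite -[t1 *: x0](addKr y1) e addrA addrK addrC.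
    exact: (dominated_graphZ _ gH (dominated_graphB gH H1 H2)).
  + move=> x b [y [b1 [t [Hyb [-> ->]]]]].
    exact: dominated_graph_extension_le gH cH Hyb.
- by move=> [y b] Hyb; exists y, b, 0; rewrite scale0r addr0 mul0r addr0.
- by exists c, 0, 0, 1; split => //; rewrite add0r scale1r mul1r add0r.
Qed.

(* The union with G0 is needed because the union of the empty chain is empty. *)
Lemma dominated_graph_chain G0 : dominated_graph G0 ->
  forall F : set (set (X * R)), F `<=` (fun A => dominated_graph (A `|` G0)) ->
  total_on F subset -> dominated_graph (\bigcup_(B in F) B `|` G0).
Proof.
move=> gG0 F FP Ftot; set U := \bigcup_(B in F) B.
have common u v : (U `|` G0) u -> (U `|` G0) v ->
    exists H, [/\ dominated_graph H, H `<=` U `|` G0, H u & H v].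
  have inU B : F B -> B `|` G0 `<=` U `|` G0.
    by move=> FB w [Bw|G0w]; [left; exists B|right].
  move=> [[B FB Bu]|G0u] [[C FC Cv]|G0v].
  - have [BC|CB] := Ftot _ _ FB FC.
      by exists (C `|` G0); split; [exact: FP|exact: inU FC|left; exact: BC|left].
    by exists (B `|` G0); split; [exact: FP|exact: inU FB|left|left; exact: CB].
  - by exists (B `|` G0); split; [exact: FP|exact: inU FB|left|right].
  - by exists (C `|` G0); split; [exact: FP|exact: inU FC|right|left].
  - by exists G0; split => // w; right.
have [G00 _ _ _] := gG0; split.
- by right.
- move=> a u v Uu Uv; have [H [[_ HC _ _] HU Hu Hv]] := common _ _ Uu Uv.
  exact/HU/HC.
- move=> x b c Ub Uc; have [H [[_ _ Hf _] _ Hb Hc]] := common _ _ Ub Uc.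
  exact: Hf Hb Hc.
- by move=> x b Ub; have [H [[_ _ _ Hp] _ Hb _]] := common _ _ Ub Ub; exact: Hp.
Qed.

Theorem hahn_banach G0 : dominated_graph G0 ->
  exists g : X -> R, [/\ (forall (a : R) x y, g (a *: x + y) = a * g x + g y),
    (forall x, g x <= p x) & (forall x b, G0 (x, b) -> g x = b)].
Proof.
move=> gG0; have [A [gA Amax]] := Zorn_bigcup (dominated_graph_chain gG0).
set H := A `|` G0 in gA.
have total x : exists b, H (x, b).
  apply: contrapT => nx.
  have [H' [gH' HH' [c H'c]]] :=
    dominated_graph_extend gA (fun b Hb => nx (ex_intro _ b Hb)).
  apply: (Amax H'); last by rewrite setUidl // => u G0u; apply/HH'; right.
  split=> [u Au|H'A]; first by apply/HH'; left.
  by apply: nx; exists c; left; exact: H'A.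
have [_ HC Hf Hp] := gA.
exists (fun x => projT1 (cid (total x))); split.
- move=> a x y; case: cid => b Hb /=; case: cid => bx Hx; case: cid => cy Hy /=.
  exact: Hf Hb (HC a (x, bx) (y, cy) Hx Hy).
- by move=> x; case: cid => b /= /Hp.
- by move=> x b G0b; case: cid => c /= Hc; apply: Hf Hc _; right.
Qed.

End HahnBanach.

Section LinearFunctionals.
Variables (R : realType) (X : normedModType R).
Implicit Types (f g : X -> R) (x y : X).

Lemma lin_functional0 f : lin_functional f -> f 0 = 0.
Proof. by move=> lf; have := lf 1 0 0; rewrite scale1r addr0 mul1r; lra. Qed.

Lemma lin_functionalZ f a x : lin_functional f -> f (a *: x) = a * f x.
Proof. by move=> lf; have := lf a x 0; rewrite !addr0 lin_functional0 // addr0. Qed.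

Lemma lin_functionalD f x y : lin_functional f -> f (x + y) = f x + f y.
Proof. by move=> lf; have := lf 1 x y; rewrite scale1r mul1r. Qed.

Lemma lin_functionalN f x : lin_functional f -> f (- x) = - f x.
Proof. by move=> lf; rewrite -scaleN1r lin_functionalZ // mulN1r. Qed.

Lemma lin_functionalB f x y : lin_functional f -> f (x - y) = f x - f y.
Proof. by move=> lf; rewrite lin_functionalD // lin_functionalN. Qed.

Lemma lin_functional_continuous f M : lin_functional f ->
  (forall x, `|f x| <= M * `|x|) -> continuous f.
Proof.
move=> lf fM x; apply/cvgrPdist_lt => e e0.
have M1 : 0 < `|M| + 1 by rewrite ltr_pwDr // normr_ge0.
apply/nbhs_normP; exists (e / (`|M| + 1)); first by rewrite /= divr_gt0.
move=> y /=; rewrite -lin_functionalB // ltr_pdivlMr // => hy.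
apply: le_lt_trans (fM _) _.
have := normr_ge0 (x - y); have := ler_wpM2r (normr_ge0 (x - y)) (ler_norm M).
nra.
Qed.

Lemma dual_bounded f : dual f -> exists2 M, 0 < M & forall x, `|f x| <= M * `|x|.
Proof.
move=> [lf cf]; have /cvgrPdist_lt/(_ 1 ltr01) := cf 0.
move=> /nbhs_normP [d /= d0 H]; rewrite lin_functional0 // in H.
exists (2 / d); first by rewrite divr_gt0.
move=> x; have [->|x0] := eqVneq x 0.
  by rewrite lin_functional0 // !normr0 mulr0.
have nx : 0 < `|x| by rewrite normr_gt0.
pose k := d / (2 * `|x|).
have k0 : 0 < k by rewrite /k divr_gt0 // mulr_gt0.
have : `|0 - f (k *: x)| < 1.
  apply: H; rewrite /ball_ /= sub0r normrN normrZ gtr0_norm // /k.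
  have -> : d / (2 * `|x|) * `|x| = d / 2 by field; rewrite gt_eqF.
  lra.
rewrite sub0r normrN lin_functionalZ // normrM gtr0_norm // => hk.
have e1 : d * `|f x| = 2 * `|x| * (k * `|f x|) by rewrite /k; field; rewrite gt_eqF.
have e2 : d * (2 / d * `|x|) = 2 * `|x| by field; rewrite gt_eqF.
rewrite -(ler_pM2l d0) e1 e2.
have := normr_ge0 (f x); nra.
Qed.

Lemma dnorm_set_ubound f : dual f ->
  has_ubound [set `|f x| | x in [set x : X | `|x| <= 1]].
Proof.
move=> /dual_bounded [M M0 fM]; exists M => _ [x /= x1 <-].
by apply: le_trans (fM x) _; rewrite ler_piMr // ltW.
Qed.

Lemma dual_dnorm_ge0 f : dual f -> 0 <= dnorm f.
Proof.
move=> df; apply: le_trans (normr_ge0 (f 0)) (ub_le_sup (dnorm_set_ubound df) _).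
by exists 0 => //=; rewrite normr0.
Qed.

Lemma ler_dnorm f x : dual f -> `|f x| <= dnorm f * `|x|.
Proof.
move=> df; have [lf _] := df.
have [->|x0] := eqVneq x 0; first by rewrite lin_functional0 // !normr0 mulr0.
have nx : 0 < `|x| by rewrite normr_gt0.
have : `|f (`|x|^-1 *: x)| <= dnorm f.
  apply: ub_le_sup; first exact: dnorm_set_ubound.
  exists (`|x|^-1 *: x) => //=.
  by rewrite normrZ normrV ?unitfE ?gt_eqF // normr_id mulVf ?gt_eqF.
rewrite lin_functionalZ // normrM normrV ?unitfE ?gt_eqF // normr_id.
by rewrite ler_pdivrMl // mulrC.
Qed.

Lemma dnorm_le f M : 0 <= M -> (forall x, `|f x| <= M * `|x|) -> dnorm f <= M.
Proof.
move=> M0 fM; apply: ge_sup; first by exists `|f 0|, 0 => //=; rewrite normr0.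
by move=> _ [x /= x1 <-]; apply: le_trans (fM x) _; rewrite ler_piMr.
Qed.

Lemma dual0 : dual (fun _ : X => 0).
Proof. by split; [move=> a x y; rewrite mulr0 addr0|exact: cst_continuous]. Qed.

Lemma dual_lincomb a f g : dual f -> dual g -> dual (fun x => a * f x + g x).
Proof.
move=> [lf cf] [lg cg]; split; first by move=> b x y; rewrite lf lg; ring.
move=> x; apply: cvgD; last exact: cg.
by apply: cvgM; [exact: cvg_cst|exact: cf].
Qed.

Lemma hahn_banach_normed (M : R) (G : set (X * R)) : 0 <= M ->
  dominated_graph (fun x => M * `|x|) G ->
  exists g, [/\ dual g, forall x, `|g x| <= M * `|x| &
                forall x b, G (x, b) -> g x = b].
Proof.
move=> M0 gG.
have pD x y : M * `|x + y| <= M * `|x| + M * `|y|.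
  by rewrite -mulrDr ler_wpM2l // ler_normD.
have pZ t x : 0 <= t -> M * `|t *: x| = t * (M * `|x|).
  by move=> t0; rewrite normrZ ger0_norm // mulrCA.
have [g [lg gM gG0]] := hahn_banach pD pZ gG.
have gM' x : `|g x| <= M * `|x|.
  rewrite ler_norml gM andbT.
  by have := gM (- x); rewrite lin_functionalN // normrN lerNl.
by exists g; split => //; split => //; exact: lin_functional_continuous gM'.
Qed.

End LinearFunctionals.

Section Restriction.
Variables (R : realType) (X : normedModType R) (V : lsubspace X).
Local Notation S := (subsp V).
Local Notation sval := (@Defs.sval _ _ V).

Lemma svalB (v w : S) : sval (v - w) = sval v - sval w.
Proof. by change (sval v + (-1) *: sval w = sval v - sval w); rewrite scaleN1r. Qed.

Lemma svalZ a (v : S) : sval (a *: v) = a *: sval v.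
Proof. by []. Qed.

Lemma sval_continuous : continuous sval.
Proof.
move=> v; have FF := @nbhs_filter S v; apply/cvgrPdist_lt => e e0.
by apply/(@nbhs_normP R S); exists e => // w; rewrite /= -svalB.
Qed.

Definition restr (z : X -> R) : S -> R := z \o sval.

Lemma dual_restr z : dual z -> dual (restr z).
Proof.
move=> [lz cz]; split; first by move=> a v w; exact: lz.
by move=> v; apply: continuous_comp; [exact: sval_continuous|exact: cz].
Qed.

Lemma dnorm_restr z : dual z -> dnorm (restr z) <= dnorm z.
Proof.
move=> dz; apply: dnorm_le (dual_dnorm_ge0 dz) _ => v.
exact: (ler_dnorm (sval v) dz).
Qed.

Lemma dual_extension (f : S -> R) (M : R) : dual f -> 0 <= M ->
  (forall v, `|f v| <= M * `|v|) ->
  exists z : X -> R, [/\ dual z, forall x, `|z x| <= M * `|x| & restr z = f].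
Proof.
move=> [lf _] M0 fM.
pose G := [set u : X * R | exists v : S, u = (sval v, f v)].
have gG : dominated_graph (fun x : X => M * `|x|) G.
  split.
  - by exists 0; rewrite lin_functional0.
  - by move=> a u w [v1 ->] [v2 ->]; exists (a *: v1 + v2); rewrite lf.
  - by move=> x b c [v1 [-> ->]] [v2 [/val_inj -> ->]].
  - by move=> x b [v [-> ->]]; exact: le_trans (ler_norm _) (fM v).
have [z [dz zM zG]] := hahn_banach_normed M0 gG.
by exists z; split => //; apply/funext => v; apply: zG; exists v.
Qed.

Lemma separating_functional (x0 : X) (d : R) : 0 < d ->
  (forall v : S, d <= `|x0 - sval v|) ->
  exists z : X -> R, [/\ dual z, (forall x, `|z x| <= `|x|), z x0 = d &
                         forall v : S, z (sval v) = 0].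
Proof.
move=> d0 dH.
pose G := [set u : X * R | exists (v : S) (t : R), u = (sval v + t *: x0, t * d)].
have gG : dominated_graph (fun x : X => 1 * `|x|) G.
  split.
  - by exists 0, 0; rewrite scale0r addr0 mul0r.
  - move=> a u w [v1 [t1 ->]] [v2 [t2 ->]] /=; exists (a *: v1 + v2), (a * t1 + t2).
    rewrite /= scalerDr scalerDl scalerA mulrDl mulrA.
    by congr pair; rewrite addrACA.
  - move=> x b c [v1 [t1 [-> ->]]] [v2 [t2 [e ->]]].
    have [<-//|t12] := eqVneq t1 t2.
    pose w := (t1 - t2)^-1 *: (v2 - v1).
    have ew : sval w = x0.
      rewrite svalZ svalB; apply: (@scalerI _ _ (t1 - t2)); first by rewrite subr_eq0.
      rewrite scalerA mulfV ?subr_eq0 // scale1r scalerBl.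
      by rewrite -[t1 *: x0](addKr (sval v1)) e addrA addrK addrC.
    by have := dH w; rewrite ew subrr normr0 leNgt d0.
  - move=> x b [v [t [-> ->]]]; rewrite mul1r.
    have [->|t0] := eqVneq t 0; first by rewrite mul0r normr_ge0.
    have -> : sval v + t *: x0 = t *: (x0 - sval ((- t^-1) *: v)).
      by rewrite svalZ scalerBr scalerA mulrN mulfV // scaleN1r opprK addrC.
    rewrite normrZ; apply: le_trans (ler_wpM2r (ltW d0) (ler_norm t)) _.
    by apply: ler_wpM2l; [exact: normr_ge0|exact: dH].
have [z [dz zM zG]] := hahn_banach_normed ler01 gG.
exists z; split => //.
- by move=> x; rewrite -[`|x|]mul1r.
- by apply: zG; exists 0, 1; rewrite add0r scale1r mul1r.
- by move=> v; apply: zG; exists v, 0; rewrite scale0r addr0 mul0r.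
Qed.

Lemma closed_subspace_annihilator (x0 : X) : closed (lss V) ->
  (forall z, dual z -> (forall v : S, z (sval v) = 0) -> z x0 = 0) -> lss V x0.
Proof.
move=> cV ann; apply: contrapT => nx0.
have : nbhs x0 (~` lss V) by apply: open_nbhs_nbhs; split => //; exact: closed_openC.
move=> /nbhs_normP [d /= d0 dV].
have [|z [dz _ zx0 zV]] := @separating_functional x0 d d0.
  move=> v; rewrite leNgt; apply/negP => hv.
  exact: (dV (sval v)) (subsp_in v).
by move: d0; rewrite -zx0 ann // ltxx.
Qed.

End Restriction.

Arguments restr {R X V}.

Section TripleNorm.
Variables (R : realType) (W : normedModType R) (Y : set (W -> R)).
Hypothesis dY : dual_subspace Y.

Lemma dual_subspace_dual f : Y f -> dual f.
Proof. by case: dY => YD _ _; exact: YD. Qed.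

Let tnorm_set (x : W) := [set f x | f in [set f | Y f /\ dnorm f <= 1]].

Let tnorm_set_ubound x : ubound (tnorm_set x) `|x|.
Proof.
move=> _ [f [Yf df] <-]; apply: le_trans (ler_norm _) _.
apply: le_trans (ler_dnorm x (dual_subspace_dual Yf)) _.
by rewrite ler_piMl ?normr_ge0.
Qed.

Let unit_ball0 : Y (fun _ => 0) /\ dnorm (fun _ : W => (0 : R)) <= 1.
Proof.
case: dY => _ Y0 _; split => //.
by apply: le_trans (dnorm_le (lexx 0) _) ler01 => x; rewrite normr0 mul0r.
Qed.

Let tnorm_set0 x : tnorm_set x !=set0.
Proof. by exists 0, (fun _ => 0). Qed.

Lemma tnorm_ge f x : Y f -> dnorm f <= 1 -> f x <= tnorm Y x.
Proof.
move=> Yf df; apply: ub_le_sup; last by exists f.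
by exists `|x|; exact: tnorm_set_ubound.
Qed.

Lemma tnorm_le_norm x : tnorm Y x <= `|x|.
Proof. by apply: ge_sup; [exact: tnorm_set0|exact: tnorm_set_ubound]. Qed.

Lemma tnorm_le x r : (forall f, Y f -> dnorm f <= 1 -> f x <= r) -> tnorm Y x <= r.
Proof.
by move=> H; apply: ge_sup; [exact: tnorm_set0|move=> _ [f [Yf df] <-]; exact: H].
Qed.

Lemma tnorm_ge0 x : 0 <= tnorm Y x.
Proof. by have [Y0 d0] := unit_ball0; exact: (tnorm_ge x Y0 d0). Qed.

Lemma tnormD x y : tnorm Y (x + y) <= tnorm Y x + tnorm Y y.
Proof.
apply: tnorm_le => f Yf df; have [lf _] := dual_subspace_dual Yf.
by rewrite lin_functionalD //; apply: lerD; exact: tnorm_ge.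
Qed.

Lemma tnormN_le x : tnorm Y (- x) <= tnorm Y x.
Proof.
apply: tnorm_le => f Yf df; have [lf _] := dual_subspace_dual Yf.
have Yn : Y (fun x => -1 * f x + 0) by case: dY => _ Y0 YC; exact: YC.
rewrite lin_functionalN //; have := tnorm_ge x Yn; rewrite mulN1r addr0; apply.
apply: le_trans df; apply: dnorm_le; first exact/dual_dnorm_ge0/dual_subspace_dual.
by move=> z; rewrite mulN1r addr0 normrN; exact: ler_dnorm (dual_subspace_dual Yf).
Qed.

Lemma tnormZ_ge0 (a : R) x : 0 <= a -> tnorm Y (a *: x) = a * tnorm Y x.
Proof.
move=> a0; apply/le_anti/andP; split.
  apply: tnorm_le => f Yf df; have [lf _] := dual_subspace_dual Yf.
  by rewrite lin_functionalZ //; apply: ler_wpM2l => //; exact: tnorm_ge.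
have [->|an0] := eqVneq a 0; first by rewrite mul0r tnorm_ge0.
have ap : 0 < a by rewrite lt_neqAle eq_sym an0.
rewrite mulrC -ler_pdivlMr //; apply: tnorm_le => f Yf df.
have [lf _] := dual_subspace_dual Yf.
by rewrite ler_pdivlMr // mulrC -lin_functionalZ //; exact: tnorm_ge.
Qed.

Lemma tnormZ (a : R) x : tnorm Y (a *: x) = `|a| * tnorm Y x.
Proof.
have [a0|a0] := leP 0 a; first by rewrite tnormZ_ge0 // ger0_norm.
have -> : a *: x = `|a| *: (- x) by rewrite ltr0_norm // scaleNr scalerN opprK.
rewrite tnormZ_ge0 ?normr_ge0 //; congr (_ * _).
by apply/le_anti; rewrite tnormN_le -{1}(opprK x) tnormN_le.
Qed.

End TripleNorm.

Section LiftedDualSubspace.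
Variables (R : realType) (X : normedModType R) (V : lsubspace X).
Local Notation S := (subsp V).
Local Notation sval := (@Defs.sval _ _ V).
Variable Y : set (S -> R).
Hypothesis dY : dual_subspace Y.

Definition lift_dual : set (X -> R) := [set z | dual z /\ Y (restr z)].

Lemma lift_dual_subspace : dual_subspace lift_dual.
Proof.
case: dY => _ Y0 YC; split.
- by move=> z [].
- by split; [exact: dual0|exact: Y0].
- by move=> a f g [df Yf] [dg Yg]; split; [exact: dual_lincomb|exact: YC].
Qed.

Lemma lift_dual_norm_closed : norm_closed Y -> norm_closed lift_dual.
Proof.
move=> cY f df H; split => //; apply: cY; first exact: dual_restr.
move=> e e0; have [g [dg Yg] hg] := H e e0; exists (restr g) => //.
apply: le_lt_trans hg.
apply: (@dnorm_restr _ _ V (fun x => f x - g x)).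
by rewrite (_ : (fun x => f x - g x) = fun x => -1 * g x + f x);
  [exact: dual_lincomb|apply/funext => x; rewrite mulN1r addrC].
Qed.

Lemma lift_dual_annihilator z : dual z -> (forall v : S, z (sval v) = 0) ->
  lift_dual z.
Proof.
move=> dz zV; split => //; case: dY => _ Y0 _.
by rewrite (_ : restr z = fun _ => 0) //; apply/funext => v; exact: zV.
Qed.

Lemma lift_dual_extension f (M : R) : Y f -> 0 <= M ->
  (forall v, `|f v| <= M * `|v|) ->
  exists z, [/\ lift_dual z, forall x, `|z x| <= M * `|x| & restr z = f].
Proof.
move=> Yf M0 fM.
have [z [dz zM zf]] := dual_extension (dual_subspace_dual dY Yf) M0 fM.
by exists z; split => //; split => //; rewrite zf.
Qed.

Lemma tnorm_lift_dual_far (x : X) (d : R) : (forall v : S, d <= `|x - sval v|) ->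
  d <= tnorm lift_dual x.
Proof.
move=> dV; have [d0|d0] := leP d 0.
  by apply: le_trans d0 _; exact: tnorm_ge0 lift_dual_subspace x.
have [z [dz zx <- zV]] := separating_functional d0 dV.
apply: (tnorm_ge lift_dual_subspace x (lift_dual_annihilator dz zV)).
by apply: dnorm_le => // y; rewrite mul1r.
Qed.

Lemma tnorm_lift_dual_near (x : X) (v : S) :
  tnorm Y v <= tnorm lift_dual x + `|x - sval v|.
Proof.
apply: (tnorm_le dY) => f Yf df.
have fM u : `|f u| <= 1 * `|u|.
  apply: le_trans (ler_dnorm u (dual_subspace_dual dY Yf)) _.
  by apply: ler_wpM2r => //; exact: normr_ge0.
have [z [Zz zM <-]] := lift_dual_extension Yf ler01 fM.
have [[lz _] _] := Zz.
have -> : restr z v = z x - z (x - sval v).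
  by rewrite lin_functionalB // opprB addrC subrK.
have zn : dnorm z <= 1 by apply: dnorm_le.
have := tnorm_ge lift_dual_subspace x Zz zn.
have := zM (x - sval v); rewrite mul1r ler_norml => /andP[+ _].
lra.
Qed.

Lemma lift_dual_norming : norming Y -> norming lift_dual.
Proof.
move=> [_ _ [c [C [c0 _ nY]]]].
have dZ := lift_dual_subspace.
split; [exact: tnormD|exact: tnormZ|].
(* Either dist(x, V) >= k |x|, or some v has |x - v| < k |x| and then
   c |v| - |x - v| >= c |x| - (1 + c) k |x| = k |x|. *)
pose k := c / (2 + c).
have k0 : 0 < k by rewrite divr_gt0 //; lra.
have kc : k * (2 + c) = c by rewrite /k mulfVK // gt_eqF //; lra.
exists k, 1; split => // x; split; last by rewrite mul1r; exact: tnorm_le_norm.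
have [far|] := pselect (forall v : S, k * `|x| <= `|x - sval v|).
  exact: tnorm_lift_dual_far.
move=> /existsNP [v /negP]; rewrite -ltNge => near.
have [cv _] := nY v.
have near_v := tnorm_lift_dual_near x v.
have tri : `|x| <= `|x - sval v| + `|sval v|.
  by apply: le_trans (ler_normD _ _); rewrite subrK.
have n0 := normr_ge0 x.
nra.
Qed.

End LiftedDualSubspace.

Section PointwiseBalls.
Variables (R : realType) (U : topologicalType).

Definition ptws_ball (f : U -> R) (s : seq U) (d : R) : set (U -> R) :=
  [set h | forall t, t \in s -> `|h t - f t| < d].

Lemma ptws_nbhs_ball (f : U -> R) (A : set (U -> R)) :
  nbhs (f : {ptws U -> R}) A -> exists s d, 0 < d /\ ptws_ball f s d `<=` A.
Proof.
pose B := [set A | exists s d, 0 < d /\ ptws_ball f s d `<=` A].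
have FB : Filter B.
  split.
  - by exists [::], 1; split.
  - move=> A1 A2 [s1 [d1 [d10 H1]]] [s2 [d2 [d20 H2]]].
    exists (s1 ++ s2), (Num.min d1 d2); split; first by rewrite lt_min d10.
    move=> h hb; split; [apply: H1|apply: H2] => t ts;
      apply: lt_le_trans (hb t _) _; rewrite ?mem_cat ?ts ?orbT ?ge_min ?lexx ?orbT //.
  - by move=> A1 A2 A12 [s [d [d0 H]]]; exists s, d; split => // h /H /A12.
have : {ptws, B --> f}.
  apply/(pointwise_cvgP f FB) => t A1 /= /nbhs_ballP [e /= e0 H].
  exists [:: t], e; split => // h hb; apply: H.
  by rewrite /ball /= distrC; apply: hb; rewrite mem_seq1.
by move=> /(_ A); apply.
Qed.

End PointwiseBalls.

Section WeakStarContinuity.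
Variables (R : realType) (W : normedModType R).

Lemma wstar_eval_continuous (w : W) : continuous (fun h : wstar W => h w).
Proof.
move=> h; have FF := @nbhs_filter (wstar W) h.
exact: (pointwise_cvgP _ FF).1 cvg_id w.
Qed.

Lemma lin_on0 (Y : set (W -> R)) (L : (W -> R) -> R) : lin_on Y L ->
  Y (fun _ => 0) -> L (fun _ => 0) = 0.
Proof.
move=> lL Y0; have := lL 1 _ _ Y0 Y0.
by rewrite (_ : (fun x => 1 * 0 + 0) = fun _ => 0) ?mul1r ?addr0 //; lra.
Qed.

Variable Z : set (W -> R).
Hypothesis dZ : dual_subspace Z.

(* Induction on s: the head t is removed by correcting each z with a multiple
   of some z1 in Z with z1 t = 1 vanishing on the tail, if there is one. *)
Lemma lin_on_eval_of_kernel (s : seq W) (L : (W -> R) -> R) : lin_on Z L ->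
  (forall z, Z z -> (forall t, t \in s -> z t = 0) -> L z = 0) ->
  exists x0, forall z, Z z -> L z = z x0.
Proof.
have [ZD Z0 ZC] := dZ.
have lin z : Z z -> lin_functional z by move=> /ZD [].
elim: s L => [|t s IH] L lL HL.
  by exists 0 => z Zz; rewrite HL // lin_functional0 //; exact: lin.
have [[z1 [Zz1 [z1t z1s]]]|nex] :=
    pselect (exists z1, Z z1 /\ z1 t = 1 /\ forall y, y \in s -> z1 y = 0).
  pose w z := fun u => - (z t) * z1 u + z u.
  have Zw z : Z z -> Z (w z) by move=> Zz; exact: ZC.
  have lLw : lin_on Z (L \o w).
    move=> a f g Zf Zg /=.
    have -> : w (fun x => a * f x + g x) = (fun u => a * w f u + w g u).
      by apply/funext => u; rewrite /w; ring.
    by apply: lL; exact: Zw.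
  have [x0 Hx0] : exists x0, forall z, Z z -> L (w z) = z x0.
    apply: IH lLw _ => z Zz zs; apply: HL; first exact: Zw.
    move=> y; rewrite inE => /predU1P [->|ys]; first by rewrite /w z1t mulr1 addNr.
    by rewrite /w (z1s y ys) (zs y ys) mulr0 addr0.
  exists (L z1 *: t + x0) => z Zz.
  have -> : L z = z t * L z1 + L (w z).
    rewrite -lL //; last exact: Zw.
    by congr L; apply/funext => u; rewrite /w; ring.
  by rewrite lin // Hx0 //; ring.
apply: IH lL _ => z Zz zs; apply: HL => // y; rewrite inE => /predU1P [->|ys];
  last exact: zs.
apply: contrapT => zt0; apply: nex.
exists (fun u => (z t)^-1 * z u + 0); split; first exact: ZC.
split; first by rewrite addr0 mulVf //; exact/eqP.
by move=> y0 ys; rewrite (zs y0 ys) mulr0 addr0.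
Qed.

Lemma wstar_continuous_kernel (L : (W -> R) -> R) : lin_on Z L ->
  wstar_continuous Z L ->
  exists s : seq W, forall z, Z z -> (forall t, t \in s -> z t = 0) -> L z = 0.
Proof.
move=> lL cL; have [_ Z0 ZC] := dZ; have L0 := lin_on0 lL Z0.
have := (subspace_continuousP _ _).1 cL (fun _ => 0) Z0.
move=> /cvgrPdist_lt /(_ 1 ltr01) /ptws_nbhs_ball [s [d [d0 Hs]]].
rewrite /from_subspace L0 in Hs.
exists s => z Zz zs; apply: contrapT => Lz0.
(* z vanishes on s, so does every multiple of z, yet L (2 / L z * z) = 2. *)
pose k := 2 / L z.
have Zk : Z (fun x => k * z x + 0) by exact: ZC.
have hb : ptws_ball (fun _ => 0) s d (fun x => k * z x + 0).
  by move=> t ts; rewrite zs // mulr0 addr0 subrr normr0.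
have := Hs _ hb Zk; rewrite lL // L0 addr0 /k mulfVK; last exact/eqP.
rewrite sub0r normrN ger0_norm ?ler0n //; lra.
Qed.

Lemma wstar_continuous_eval (L : (W -> R) -> R) : lin_on Z L ->
  wstar_continuous Z L -> exists x0, forall z, Z z -> L z = z x0.
Proof.
move=> lL cL; have [s sL] := wstar_continuous_kernel lL cL.
exact: lin_on_eval_of_kernel lL sL.
Qed.

Lemma eval_wstar_continuous (L : (W -> R) -> R) (w : W) :
  (forall z, Z z -> L z = z w) -> wstar_continuous Z L.
Proof.
move=> Lw; apply: (@subspace_eq_continuous _ _ _ (fun h : wstar W => h w)).
  by move=> z; rewrite inE => Zz; rewrite /from_subspace Lw.
by apply: continuous_subspaceT; exact: wstar_eval_continuous.
Qed.

End WeakStarContinuity.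

Section MazurSubspace.
Variables (R : realType) (X : normedModType R) (V : lsubspace X).
Local Notation S := (subsp V).
Local Notation sval := (@Defs.sval _ _ V).
Variable Y : set (S -> R).
Hypothesis dY : dual_subspace Y.

Lemma lin_on_restr phi : lin_on Y phi -> lin_on (lift_dual Y) (phi \o restr).
Proof. by move=> lphi a f g [_ Yf] [_ Yg]; exact: lphi. Qed.

Lemma wstar_seq_continuous_restr phi : wstar_seq_continuous Y phi ->
  wstar_seq_continuous (lift_dual Y) (phi \o restr).
Proof.
move=> sphi u g Zu Zg ug; apply: (sphi (restr \o u) (restr g)).
- by move=> n; case: (Zu n).
- by case: Zg.
apply/pointwise_cvgP => v.
exact: (pointwise_cvgP _ _).1 ug (sval v).
Qed.

Lemma lift_dual_eval_in_subspace phi x0 : closed (lss V) -> lin_on Y phi ->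
  (forall z, lift_dual Y z -> phi (restr z) = z x0) -> lss V x0.
Proof.
move=> cV lphi phix0; apply: closed_subspace_annihilator cV _ => z dz zV.
rewrite -phix0; last exact: lift_dual_annihilator.
rewrite (_ : restr z = fun _ => 0); last by apply/funext => v; exact: zV.
by apply: lin_on0 lphi _; case: dY.
Qed.

Lemma wstar_continuous_of_fully_mazur phi : closed (lss V) -> fully_mazur X ->
  norming Y -> norm_closed Y -> lin_on Y phi -> wstar_seq_continuous Y phi ->
  wstar_continuous Y phi.
Proof.
move=> cV mX nY cY lphi sphi.
have dZ := lift_dual_subspace dY.
have [x0 phix0] := wstar_continuous_eval dZ (lin_on_restr lphi)
  (mX _ dZ (lift_dual_norming dY nY) (lift_dual_norm_closed cY) _
     (lin_on_restr lphi) (wstar_seq_continuous_restr sphi)).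
have x0V := lift_dual_eval_in_subspace cV lphi phix0.
apply: (@eval_wstar_continuous _ _ _ _ (SubElt (asboolT x0V))) => w Yw.
have dw := dual_subspace_dual dY Yw.
have [z [Zz _ <-]] :=
  lift_dual_extension dY Yw (dual_dnorm_ge0 dw) (fun v => ler_dnorm v dw).
exact: phix0.
Qed.

End MazurSubspace.

Section MackeySets.
Variables (R : realType) (W : normedModType R).
Implicit Types (K : set (W -> R)).

Lemma pK_ge K x f B : (forall g, K g -> `|g x| <= B) -> K f -> `|f x| <= pK K x.
Proof.
move=> KB Kf; apply: ub_le_sup; last by exists f.
by exists B => _ [g Kg <-]; exact: KB.
Qed.

Lemma pK_le K x r : 0 <= r -> (forall g, K g -> `|g x| <= r) -> pK K x <= r.
Proof.
move=> r0 Kr; have [[g Kg]|K0] := pselect (exists g, K g).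
  apply: ge_sup; first by exists `|g x|, g.
  by move=> _ [h Kh <-]; exact: Kr.
rewrite /pK (_ : [set `|f x| | f in K] = set0) ?sup0 //.
by apply/seteqP; split => // t [g Kg _]; apply: K0; exists g.
Qed.

Lemma wstar_compact_bounded (K : set (wstar W)) x : compact K ->
  exists B, forall g, K g -> `|g x| <= B.
Proof.
move=> cK; have : compact [set g x | g in K].
  apply: continuous_compact => //; apply: continuous_subspaceT.
  exact: wstar_eval_continuous.
move=> /compact_bounded [M0 [_ HM]].
by exists (M0 + 1) => g Kg; apply: (HM (M0 + 1)); [lra|exists g].
Qed.

Lemma wstar_hausdorff : hausdorff_space (wstar W).
Proof. exact: (@hausdorff_product W (fun _ => R) (fun _ => @Rhausdorff R)). Qed.

Lemma wstar_box_compact (B : W -> R) :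
  compact [set z : wstar W | forall x, `[- B x, B x]%classic (z x)].
Proof.
exact: (@tychonoff W (fun _ => R) (fun x => `[- B x, B x]%classic)
  (fun x => @segment_compact R (- B x) (B x))).
Qed.

Lemma wstar_closed_lin_functional : closed [set z : wstar W | lin_functional z].
Proof.
pose defect (p : R * (W * W)) (z : wstar W) : R :=
  z (p.1 *: p.2.1 + p.2.2) - (p.1 * z p.2.1 + z p.2.2).
have -> : [set z : wstar W | lin_functional z] =
    \bigcap_(p in [set: R * (W * W)]) (defect p @^-1` [set 0]).
  apply/seteqP; split; first by move=> z lz [a [x y]] _; rewrite /defect /= lz subrr.
  move=> z zlin a x y; apply/eqP; rewrite -subr_eq0; apply/eqP.
  exact: (zlin (a, (x, y))).
apply: closed_bigI => -[a [x y]] _; apply: preimage_closed (@closed_eq R 0).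
move=> h _; have FF := @nbhs_filter (wstar W) h.
apply: cvgB; first exact: wstar_eval_continuous.
apply: cvgD; last exact: wstar_eval_continuous.
by apply: cvgM; [exact: cvg_cst|exact: wstar_eval_continuous].
Qed.

Lemma mackey_set_segment (Z : set (W -> R)) z : dual_subspace Z -> Z z ->
  mackey_set Z [set (fun x => t * z x) | t in `[-1, 1]].
Proof.
move=> [_ Z0 ZC] Zz; split.
- move=> _ [t _ <-]; have := ZC t _ _ Zz Z0.
  by rewrite (_ : (fun x => t * z x + 0) = (fun x => t * z x)) // funeqE => x;
    rewrite addr0.
- move=> _ _ a b [t1 T1 <-] [t2 T2 <-] ab; exists (a * t1 + b * t2).
    move: T1 T2; rewrite /= !in_itv /= -!ler_norml => T1 T2.
    apply: le_trans (ler_normD _ _) _; rewrite !normrM.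
    by apply: le_trans ab; apply: lerD; rewrite ler_piMr ?normr_ge0.
  by rewrite funeqE => x /=; rewrite mulrDl !mulrA.
- apply: continuous_compact; last exact: segment_compact.
  apply: continuous_subspaceT => t0; have FF := @nbhs_filter R t0.
  apply/(@pointwise_cvgP W R _ (fun x => t0 * z x) _) => x.
  exact: cvgM cvg_id (cvg_cst (z x)).
Qed.

End MackeySets.

Section MackeySubspace.
Variables (R : realType) (X : normedModType R) (V : lsubspace X).
Local Notation S := (subsp V).
Local Notation sval := (@Defs.sval _ _ V).
Variable Y : set (S -> R).
Hypothesis dY : dual_subspace Y.

Lemma restr_wstar_continuous : continuous (fun z : wstar X => restr z : wstar S).
Proof.
move=> h; have FF := @nbhs_filter (wstar X) h.
apply/(@pointwise_cvgP S R _ (restr h) _) => v.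
exact: wstar_eval_continuous (sval v) h.
Qed.

Lemma mackey_set_restr K : mackey_set (lift_dual Y) K -> mackey_set Y (restr @` K).
Proof.
move=> [KZ aK cK]; split.
- by move=> _ [z Kz <-]; case: (KZ z Kz).
- move=> _ _ a b [z1 K1 <-] [z2 K2 <-] ab.
  by exists (fun x => a * z1 x + b * z2 x) => //; exact: aK.
- apply: continuous_compact cK.
  by apply: continuous_subspaceT; exact: restr_wstar_continuous.
Qed.

Lemma pK_restr K v : pK (restr @` K) v = pK K (sval v).
Proof.
rewrite /pK; congr sup; apply/seteqP; split.
  by move=> _ [_ [z Kz <-] <-]; exists z.
by move=> _ [z Kz <-]; exists (restr z); [exists z|].
Qed.

Lemma mackey_cauchy_sval F : Filter F -> mackey_cauchy Y F ->
  mackey_cauchy (lift_dual Y) (sval @ F).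
Proof.
move=> FF Fc K mK e e0; have [A [FA HA]] := Fc _ (mackey_set_restr mK) e e0.
exists (sval @` A); split; first by rewrite /=; apply: filterS FA => v Av; exists v.
by move=> _ _ [x Ax <-] [y Ay <-]; rewrite -svalB -pK_restr; exact: HA.
Qed.

Lemma mackey_limit_in_subspace F x0 : closed (lss V) -> ProperFilter F ->
  mackey_cvg (lift_dual Y) (sval @ F) x0 -> lss V x0.
Proof.
move=> cV PF Fx0; apply: closed_subspace_annihilator cV _ => z dz zV.
have [lz _] := dz; apply: contrapT => zx0.
have e0 : 0 < `|z x0| by rewrite normr_gt0; exact/eqP.
have mK := mackey_set_segment (lift_dual_subspace dY) (lift_dual_annihilator dY dz zV).
have /= /filter_ex [v hv] := Fx0 _ mK _ e0.
have : `|z (sval v - x0)| <= pK [set (fun x => t * z x) | t in `[-1, 1]] (sval v - x0).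
  apply: (@pK_ge _ _ _ _ _ `|z (sval v - x0)|).
    move=> _ [t Tt <-]; rewrite normrM.
    move: Tt; rewrite /= in_itv /= -ler_norml => Tt.
    by rewrite ler_piMl ?normr_ge0.
  by exists 1; [rewrite /= in_itv /=; lra|rewrite funeqE => x; rewrite mul1r].
rewrite lin_functionalB // zV sub0r normrN => zK.
by move: (lt_le_trans hv zK); rewrite ltxx.
Qed.

Definition lift_mackey (K : set (S -> R)) (M : R) : set (X -> R) :=
  [set z | [/\ forall x, `|z x| <= M * `|x|, lin_functional z & K (restr z)]].

Lemma lift_mackey_compact K M : compact (K : set (wstar S)) ->
  compact (lift_mackey K M : set (wstar X)).
Proof.
move=> cK.
have cL : closed ([set z : wstar X | lin_functional z] `&`
    ((fun z : wstar X => restr z : wstar S) @^-1` (K : set (wstar S)))).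
  apply: closedI; first exact: wstar_closed_lin_functional.
  apply: preimage_closed; first by move=> h _; exact: restr_wstar_continuous.
  exact: compact_closed (@wstar_hausdorff R S) cK.
have := compact_closedI (@wstar_box_compact R X (fun x : X => M * `|x|)) cL.
congr compact; apply/seteqP; split.
  move=> z [/= zM [lz Kz]]; split => // x.
  by have := zM x; rewrite /= in_itv /= -ler_norml.
move=> z [zM lz Kz]; split; last by split.
by move=> x; rewrite /= in_itv /= -ler_norml.
Qed.

Lemma mackey_set_lift K M : 0 <= M -> mackey_set Y K ->
  mackey_set (lift_dual Y) (lift_mackey K M).
Proof.
move=> M0 [KY aK cK]; split.
- move=> z [zM lz Kz]; split; last exact: KY.
  by split => //; exact: lin_functional_continuous zM.
- move=> z1 z2 a b [M1 l1 K1] [M2 l2 K2] ab; split.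
  + move=> x; apply: le_trans (ler_normD _ _) _; rewrite !normrM.
    apply: le_trans (_ : `|a| * (M * `|x|) + `|b| * (M * `|x|) <= _).
      by apply: lerD; apply: ler_wpM2l => //; exact: normr_ge0.
    rewrite -mulrDl; apply: ler_piMl => //.
    by apply: mulr_ge0 => //; exact: normr_ge0.
  + by move=> c x y; rewrite l1 l2; ring.
  + exact: aK.
- exact: lift_mackey_compact.
Qed.

Lemma pK_le_lift_mackey (K : set (S -> R)) M v :
  0 <= M -> K `<=` dual (X := S) ->
  (forall f, K f -> forall u, `|f u| <= M * `|u|) ->
  pK K v <= pK (lift_mackey K M) (sval v).
Proof.
move=> M0 Kd KM.
have pK0 : 0 <= pK (lift_mackey K M) (sval v).
  have [[z Kz]|K0] := pselect (exists z, lift_mackey K M z).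
    apply: le_trans (normr_ge0 (z (sval v))) (pK_ge _ Kz).
    by move=> g [gM _ _]; exact: gM.
  rewrite /pK (_ : [set _ | f in _] = set0) ?sup0 //.
  by apply/seteqP; split => // t [g Kg _]; apply: K0; exists g.
apply: pK_le pK0 _ => f Kf.
have [z [[lz _] zM zf]] := dual_extension (Kd f Kf) M0 (KM f Kf); subst f.
have Lz : lift_mackey K M z by split.
by apply: (pK_ge _ Lz) => g [gM _ _]; exact: gM.
Qed.

End MackeySubspace.

Section CompleteSubspace.
Variables (R : realType) (X : completeNormedModType R) (V : lsubspace X).
Local Notation sval := (@Defs.sval _ _ V).

(* Indexed by the closedness proof, which the completeness instance needs. *)
Definition complete_subsp of closed (lss V) := subsp V.
Variable cV : closed (lss V).
HB.instance Definition _ := NormedModule.on (complete_subsp cV).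

Lemma complete_subsp_cauchy_cvg (F : set_system (complete_subsp cV)) :
  ProperFilter F -> cauchy F -> cvg F.
Proof.
move=> PF /cauchyP Fc.
have PG : ProperFilter (sval @ F) by exact: fmap_proper_filter.
have Gc : cauchy (sval @ F).
  apply/cauchyP => e e0; have [v Fv] := Fc e e0; exists (sval v).
  rewrite /=; apply: filterS Fv => w.
  by rewrite -!ball_normE /ball_ /= -svalB.
have /cvg_ex [x0 Gx0] := @cauchy_cvg X _ PG Gc.
have x0V : lss V x0.
  apply: (@closed_cvg _ _ F PF sval (lss V) cV _ x0 Gx0).
  by apply: nearW => w; exact: subsp_in.
apply/cvg_ex; exists (SubElt (asboolT x0V) : complete_subsp cV).
move=> A /(@nbhs_normP R (complete_subsp cV)) [e /= e0 He].
have : (sval @ F) (ball_ Num.norm x0 e) by apply: Gx0; apply/nbhs_normP; exists e.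
rewrite /=; apply: filterS => w hw; apply: He.
by move: hw; rewrite /ball_ /= -(svalB (SubElt (asboolT x0V)) w).
Qed.

HB.instance Definition _ :=
  Uniform_isComplete.Build (complete_subsp cV) complete_subsp_cauchy_cvg.

End CompleteSubspace.

Section CompleteMackeySubspace.
Variables (R : realType) (X : completeNormedModType R) (V : lsubspace X).
Variable cV : closed (lss V).
Local Notation S := (subsp V).
Local Notation sval := (@Defs.sval _ _ V).

Lemma wstar_compact_norm_bounded (K : set (S -> R)) : K `<=` dual (X := S) ->
  compact (K : set (wstar S)) ->
  exists M, 0 <= M /\ forall f, K f -> forall v : S, `|f v| <= M * `|v|.
Proof.
move=> Kd cK; pose KC := K : set (complete_subsp cV -> R^o).
have KCb : pointwise_bounded KC.
  by move=> v; have [B KB] := wstar_compact_bounded v cK; exists B.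
have KCl f : KC f -> bounded_fun_norm f /\ linear f.
  move=> Kf; have [lf _] := Kd f Kf; split; last by move=> a u w; exact: lf.
  have [M M0 fM] := dual_bounded (Kd f Kf).
  move=> r; exists (M * r) => x xr; apply: le_trans (fM x) _.
  by apply: ler_wpM2l; [exact: ltW|exact: xr].
have [M KM] := Banach_Steinhauss KCl KCb 1.
exists `|M|; split=> [|f Kf v]; first exact: normr_ge0.
apply: le_trans (ler_dnorm v (Kd f Kf)) _; apply: ler_wpM2r; first exact: normr_ge0.
apply: ge_sup; first by exists `|f 0|, 0 => //=; rewrite normr0.
by move=> _ [x /= x1 <-]; apply: le_trans (ler_norm M); exact: KM.
Qed.

Variable Y : set (S -> R).
Hypothesis dY : dual_subspace Y.

Lemma mackey_complete_of_fully_mackey : fully_mackey_complete X -> norming Y ->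
  norm_closed Y -> mackey_complete Y.
Proof.
move=> mX nY cY F PF Fc.
have [x0 Fx0] := mX _ (lift_dual_subspace dY) (lift_dual_norming dY nY)
  (lift_dual_norm_closed cY) (sval @ F) _ (mackey_cauchy_sval _ Fc).
have x0V := mackey_limit_in_subspace dY cV PF Fx0.
pose v0 : S := SubElt (asboolT x0V).
exists v0 => K [KY aK cK] e e0.
have Kd f : K f -> dual f by move=> /KY; exact: dual_subspace_dual.
have [M [M0 KM]] := wstar_compact_norm_bounded Kd cK.
have := Fx0 _ (mackey_set_lift M0 (And3 KY aK cK)) e e0.
rewrite /=; apply: filterS => v; apply: le_lt_trans.
rewrite (_ : x0 = sval v0) // -svalB.
exact: (pK_le_lift_mackey _ M0 Kd KM).
Qed.

End CompleteMackeySubspace.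

Theorem corollary3p6 (R : realType) (X : completeNormedModType R) :
  (fully_mazur X ->
     forall V : lsubspace X, closed (lss V) -> fully_mazur (subsp V)) /\
  (fully_mackey_complete X ->
     forall V : lsubspace X, closed (lss V) -> fully_mackey_complete (subsp V)).
Proof.
split=> [mX V cV Y dY nY cY phi|mX V cV Y dY nY cY].
  exact: wstar_continuous_of_fully_mazur.
exact: mackey_complete_of_fully_mackey.
Qed.
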